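(* Every completely dependent three-dimensional copula is generalized simplified.
   Context: $\mathbb{I}=[0,1]$, $\lambda$ Lebesgue measure; points of $\mathbb{I}^3$ are written $(\mathbf{u},v)$ with $\mathbf{u}=(u_1,u_2)\in\mathbb{I}^2$. For a three-dimensional copula $C$, its Markov kernel $K_C:\mathbb{I}\times\mathcal{B}(\mathbb{I}^2)\to\mathbb{I}$ is (a version of) the regular conditional distribution of $(U_1,U_2)$ given $U_3=v$, $(U_1,U_2,U_3)\sim C$, so $C(\mathbf{u},v)=\int_{[0,v]}K_C(t,[\mathbf{0},\mathbf{u}])\,d\lambda(t)$. The conditional univariate distribution functions are $F_{1|3}(u_1|t)=K_C(t,[0,u_1]\times\mathbb{I})$ and $F_{2|3}(u_2|t)=K_C(t,\mathbb{I}\times[0,u_2])$. A copula $C$ is completely dependent (w.r.t. the last coordinate) if there exist $\lambda$-preserving maps $h_1,h_2:\mathbb{I}\to\mathbb{I}$ (i.e. $\lambda(h_i^{-1}(F))=\lambda(F)$ for all Borel $F$) such that $K(v,E)=\mathbf{1}_E(h_1(v),h_2(v))$ is a Markov kernel of $C$. A three-dimensional copula $C$ is generalized simplified if there exists a bivariate copula $A$ with $C(\mathbf{u},v)=\int_{[0,v]}A(F_{1|3}(u_1|t),F_{2|3}(u_2|t))\,d\lambda(t)$ for all $(\mathbf{u},v)\in\mathbb{I}^2\times\mathbb{I}$. *)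

From HB Require Import structures.
From mathcomp Require Import all_boot all_order all_algebra.
From mathcomp Require Import all_classical all_reals all_analysis measurable_realfun.
Set Implicit Arguments. Unset Strict Implicit. Unset Printing Implicit Defensive.
Import Order.TTheory GRing.Theory Num.Theory.
Import numFieldNormedType.Exports.
Local Open Scope classical_set_scope.
Local Open Scope ring_scope.

Definition unit_I {R : realType} : set R := `[0, 1]%classic.

Definition seg0 {R : realType} (x : R) : set R := `[0, x]%classic.

Definition copula2 {R : realType} (A : R -> R -> R) : Prop :=
  (forall x, unit_I x -> A 0 x = 0 /\ A x 0 = 0) /\
  (forall x, unit_I x -> A 1 x = x /\ A x 1 = x) /\
  (forall x1 x2 y1 y2, unit_I x1 -> unit_I x2 -> unit_I y1 -> unit_I y2 ->
     x1 <= x2 -> y1 <= y2 ->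
     0 <= A x2 y2 - A x1 y2 - A x2 y1 + A x1 y1).

Definition copula3 {R : realType} (C : R -> R -> R -> R) : Prop :=
  (forall x y, unit_I x -> unit_I y ->
     C 0 x y = 0 /\ C x 0 y = 0 /\ C x y 0 = 0) /\
  (forall x, unit_I x -> C x 1 1 = x /\ C 1 x 1 = x /\ C 1 1 x = x) /\
  (forall a1 b1 a2 b2 a3 b3,
     unit_I a1 -> unit_I b1 -> unit_I a2 -> unit_I b2 ->
     unit_I a3 -> unit_I b3 -> a1 <= b1 -> a2 <= b2 -> a3 <= b3 ->
     0 <= C b1 b2 b3 - C a1 b2 b3 - C b1 a2 b3 - C b1 b2 a3
          + C a1 a2 b3 + C a1 b2 a3 + C b1 a2 a3 - C a1 a2 a3).

(* K : I x B(I^2) -> I is a Markov kernel of C (a version of the regular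
   conditional distribution of (U1,U2) given U3 = t).  Probability measures
   on B(I^2) are represented as probability measures on the Borel sets of
   R x R carrying full mass on I^2; values of K at t outside I are irrelevant. *)
Definition markov_kernel_of {R : realType} (C : R -> R -> R -> R)
    (K : R -> set (R * R) -> \bar R) : Prop :=
  (forall t, unit_I t ->
     K t set0 = 0%E /\
     (forall E, measurable E -> (0 <= K t E)%E) /\
     semi_sigma_additive (K t) /\
     K t setT = 1%E /\ K t (unit_I `*` unit_I) = 1%E) /\
  (forall E, measurable E -> measurable_fun (unit_I : set R) (fun t : R => K t E : \bar R)) /\
  (forall u1 u2 v, unit_I u1 -> unit_I u2 -> unit_I v ->
     (C u1 u2 v)%:E =
       (\int[@lebesgue_measure R]_(t in seg0 v)
          K t (seg0 u1 `*` seg0 u2))%E).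

Definition lambda_preserving {R : realType} (h : R -> R) : Prop :=
  (forall x, unit_I x -> unit_I (h x)) /\
  measurable_fun unit_I h /\
  (forall F : set R, measurable F -> F `<=` unit_I ->
     @lebesgue_measure R (unit_I `&` h @^-1` F) = @lebesgue_measure R F).

Definition completely_dependent {R : realType} (C : R -> R -> R -> R) : Prop :=
  exists h1 h2 : R -> R, lambda_preserving h1 /\ lambda_preserving h2 /\
    markov_kernel_of C (fun v E => (\1_E (h1 v, h2 v))%:E).

Definition F13 {R : realType} (K : R -> set (R * R) -> \bar R) (u1 t : R) : R :=
  fine (K t (seg0 u1 `*` unit_I)).
Definition F23 {R : realType} (K : R -> set (R * R) -> \bar R) (u2 t : R) : R :=
  fine (K t (unit_I `*` seg0 u2)).

Definition generalized_simplified {R : realType} (C : R -> R -> R -> R) : Prop :=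
  exists A : R -> R -> R, copula2 A /\
    forall K, markov_kernel_of C K ->
      forall u1 u2 v, unit_I u1 -> unit_I u2 -> unit_I v ->
        (C u1 u2 v)%:E =
          (\int[@lebesgue_measure R]_(t in seg0 v)
             (A (F13 K u1 t) (F23 K u2 t))%:E)%E.

(* Under complete dependence the point mass at (h1 t, h2 t) is a Markov kernel
   of C, and for it the mass of a rectangle [0,u1] x [0,u2] is the product of
   the masses of the strips [0,u1] x I and I x [0,u2]; so the product copula
   works for this version of the kernel.  For an arbitrary version K, the
   integrals of t |-> K(t, [0,u1] x [0,u2]) over [0,v] are the values
   C(u1,u2,v), independent of the version.  A finite measure on the line is
   determined by its values on half-lines, so any two versions agree almost
   everywhere on every rectangle, in particular on the strips defining
   F13 and F23. *)

From HB Require Import structures.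
From mathcomp Require Import all_boot all_order all_algebra.
From mathcomp Require Import all_classical all_reals all_analysis measurable_realfun.
From mathcomp Require Import lra.
Set Implicit Arguments. Unset Strict Implicit. Unset Printing Implicit Defensive.
Import Order.TTheory GRing.Theory Num.Theory.
Import numFieldNormedType.Exports.
Local Open Scope classical_set_scope.
Local Open Scope ring_scope.

Section measure_on_halflines.
Context {R : realType}.
Local Open Scope ereal_scope.
Implicit Types m : {measure set (measurableTypeR R) -> \bar R}.

Lemma measure_ocitvE m (a b : R) :
  (a <= b)%R -> m `]-oo, a]%classic \is a fin_num ->
  m `]a, b]%classic = m `]-oo, b]%classic - m `]-oo, a]%classic.
Proof.
move=> ab ma_fin.
have disj : `]-oo, a]%classic `&` `]a, b]%classic = set0 :> set R.
  apply/seteqP; split => // x /=; rewrite !in_itv /= => -[xa /andP[ax _]].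
  by have := lt_le_trans ax xa; rewrite ltxx.
rewrite (@itv_bndbnd_setU _ _ -oo%O (BRight a) (BRight b)) ?bnd_simp //.
rewrite measureU //.
by rewrite [X in X - _]addeC addeK.
Qed.

Lemma measure_eq_of_halflines m1 m2 :
  (forall w : R, m1 `]-oo, w]%classic < +oo) ->
  (forall w : R, m1 `]-oo, w]%classic = m2 `]-oo, w]%classic) ->
  forall A, measurable A -> m1 A = m2 A.
Proof.
move=> m1_fin m1m2.
have fin_m1 w : m1 `]-oo, w]%classic \is a fin_num by rewrite ge0_fin_numE.
have m1m2_ocitv A : ocitv A -> m1 A = m2 A.
  case=> -[a b] _ <- /=; have [ab|ba] := leP a b; last first.
    by rewrite set_itv_ge ?measure0 // bnd_simp -leNgt ltW.
  by rewrite !measure_ocitvE -?m1m2 // -m1m2.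
pose g k := `](- k%:R)%R, k%:R]%classic : set R.
have g_cover : \bigcup_k g k = setT.
  rewrite -subTset => x _; exists (Num.bound `|x|) => //=.
  have /andP[xgt xlt] : (- (Num.bound `|x|)%:R < x < (Num.bound `|x|)%:R)%R.
    by rewrite -ltr_norml; exact: archi_boundP.
  by rewrite /g /= in_itv /= xgt (ltW xlt).
(* [//] closes [measurable = <<s ocitv >>]: that is how the Borel sets of [R]
   are defined. *)
apply: (@measure_unique _ _ (measurableTypeR R) (@ocitv R) g) => //.
- exact: ocitvI.
- by move=> k; exact: is_ocitv.
- move=> k; apply: le_lt_trans (m1_fin k%:R).
  apply: le_measure; rewrite ?inE; try exact: measurable_itv.
  by move=> x /=; rewrite !in_itv /= => /andP[].
Qed.
End measure_on_halflines.

Section density.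
Local Open Scope ereal_scope.

Lemma density_measure_exists d (T : measurableType d) (R : realType)
    (mu : {measure set T -> \bar R}) (D : set T) (h : T -> \bar R) :
  measurable D -> mu.-integrable D h -> (forall x, D x -> 0 <= h x) ->
  exists nu : {measure set T -> \bar R},
    forall A, nu A = \int[mu]_(x in A `&` D) h x.
Proof.
move=> mD inth h0.
have inthT := (integrable_mkcond h mD).1 inth.
have nu_ge0 E : 0 <= induced_charge inthT E.
  apply: integral_ge0 => x _; rewrite patchE.
  by case: ifPn => // /set_mem; exact: h0.
by exists (measure_of_charge _ nu_ge0) => A; rewrite integral_mkcondr.
Qed.

Lemma ae_eq_of_integral_halflines (R : realType) (D : set R) (f g : R -> \bar R) :
  measurable D -> (@lebesgue_measure R).-integrable D f ->
  (@lebesgue_measure R).-integrable D g ->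
  (forall x, D x -> 0 <= f x) -> (forall x, D x -> 0 <= g x) ->
  (forall w, \int[lebesgue_measure]_(x in `]-oo, w]%classic `&` D) f x =
             \int[lebesgue_measure]_(x in `]-oo, w]%classic `&` D) g x) ->
  ae_eq lebesgue_measure D f g.
Proof.
move=> mD intf intg f0 g0 fg.
have [nf nfE] := @density_measure_exists _ (measurableTypeR R) R _ D f mD intf f0.
have [ng ngE] := @density_measure_exists _ (measurableTypeR R) R _ D g mD intg g0.
have nfng A : measurable A -> nf A = ng A.
  apply: measure_eq_of_halflines => w; rewrite nfE ?ngE //.
  apply: integrable_lty; first exact: measurableI.
  by apply: integrableS intf => //; exact: measurableI.
apply: integral_ae_eq => //; first exact: measurable_int intg.
by move=> E ED mE; have := nfng E mE; rewrite nfE ngE setIidl.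
Qed.

End density.

Section unit_interval.
Context {R : realType}.

Lemma unit_I1 : unit_I (1 : R).
Proof. by rewrite /unit_I /= in_itv /= ler01 lexx. Qed.

Lemma seg0_subset_unit_I (v : R) : unit_I v -> seg0 v `<=` unit_I.
Proof.
rewrite /unit_I /seg0 /= in_itv /= => /andP[_ v1] x.
by rewrite /= !in_itv /= => /andP[-> /le_trans->].
Qed.

Lemma halfline_setI_unit_I (w : R) :
  `]-oo, w]%classic `&` unit_I = seg0 (Order.min w 1).
Proof.
apply/seteqP; split => x; rewrite /unit_I /seg0 /= !in_itv /= le_min.
  by move=> [-> /andP[-> ->]].
by move=> /andP[-> /andP[-> ->]].
Qed.

Lemma measurable_seg0X (u1 u2 : R) : measurable (seg0 u1 `*` seg0 u2).
Proof. by apply: measurableX; exact: measurable_itv. Qed.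

Lemma copula2_mul : copula2 ( *%R : R -> R -> R).
Proof.
split; first by move=> x _; rewrite mul0r mulr0.
split; first by move=> x _; rewrite mul1r mulr1.
by move=> x1 x2 y1 y2 _ _ _ _ x12 y12; nra.
Qed.

End unit_interval.

Lemma indic_setX_split {T U : Type} {R : realType} (A I : set T) (B J : set U) x y :
  I x -> J y ->
  \1_(A `*` B) (x, y) = \1_(A `*` J) (x, y) * \1_(I `*` B) (x, y) :> R.
Proof.
move=> Ix Jy; rewrite !indicE !in_setX (mem_set Ix) (mem_set Jy) andbT /=.
by case: (x \in A); case: (y \in B); rewrite ?mulr1 ?mulr0.
Qed.

Section markov_kernel.
Context {R : realType} (C : R -> R -> R -> R) (K : R -> set (R * R) -> \bar R).
Hypothesis hK : markov_kernel_of C K.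
Local Open Scope ereal_scope.

Lemma markov_kernel_ge0 t E : unit_I t -> measurable E -> 0 <= K t E.
Proof. by move=> tI; apply: (hK.1 t tI).2.1. Qed.

Lemma measurable_fine_markov_kernel E :
  measurable E -> measurable_fun unit_I (fun t => fine (K t E)).
Proof. by move=> mE; apply: measurableT_comp (hK.2.1 E mE). Qed.

Lemma integrable_markov_kernel_seg0X (u1 u2 : R) : unit_I u1 -> unit_I u2 ->
  (@lebesgue_measure R).-integrable unit_I (fun t => K t (seg0 u1 `*` seg0 u2)).
Proof.
move=> u1I u2I; apply/integrableP; split.
  exact: hK.2.1 _ (measurable_seg0X u1 u2).
under eq_integral => t /set_mem tI.
  rewrite gee0_abs ?markov_kernel_ge0 //; last exact: measurable_seg0X.
over.
by rewrite -(hK.2.2 _ _ _ u1I u2I unit_I1) ltry.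
Qed.

End markov_kernel.

Lemma markov_kernel_seg0X_ae_eq {R : realType} (C : R -> R -> R -> R)
    (K K' : R -> set (R * R) -> \bar R) (u1 u2 : R) :
  markov_kernel_of C K -> markov_kernel_of C K' -> unit_I u1 -> unit_I u2 ->
  ae_eq lebesgue_measure unit_I
    (fun t => K t (seg0 u1 `*` seg0 u2)) (fun t => K' t (seg0 u1 `*` seg0 u2)).
Proof.
move=> hK hK' u1I u2I.
apply: ae_eq_of_integral_halflines.
- exact: measurable_itv.
- exact: (integrable_markov_kernel_seg0X hK u1I u2I).
- exact: (integrable_markov_kernel_seg0X hK' u1I u2I).
- by move=> t tI; exact: markov_kernel_ge0 hK _ _ tI (measurable_seg0X u1 u2).
- by move=> t tI; exact: markov_kernel_ge0 hK' _ _ tI (measurable_seg0X u1 u2).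
move=> w; rewrite halfline_setI_unit_I.
have [w0|w0] := ltP w 0.
  have -> : seg0 (Order.min w 1) = set0.
    by rewrite /seg0 set_itv_ge // bnd_simp -ltNge gt_min w0.
  by rewrite !(@integral_set0 _ (measurableTypeR R)).
have wI : unit_I (Order.min w 1).
  by rewrite /unit_I /= in_itv /= le_min w0 ler01 ge_min lexx orbT.
by rewrite -(hK.2.2 _ _ _ u1I u2I wI) -(hK'.2.2 _ _ _ u1I u2I wI).
Qed.

Theorem theorem3p2 (R : realType) (C : R -> R -> R -> R) :
  copula3 C -> completely_dependent C -> generalized_simplified C.
Proof.
move=> _ [h1 [h2 [[h1I _] [[h2I _] hD]]]].
exists *%R; split; first exact: copula2_mul.
move=> K hK u1 u2 v u1I u2I vI.
have vsub := seg0_subset_unit_I vI.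
have mI : measurable (unit_I : set R) by exact: measurable_itv.
have mseg0v : measurable (seg0 v : set R) by exact: measurable_itv.
rewrite (hD.2.2 _ _ _ u1I u2I vI); apply: ae_eq_integral => //.
- exact: measurable_funS mI vsub (hD.2.1 _ (measurable_seg0X u1 u2)).
- apply: measurable_funS mI vsub _; apply/measurable_EFinP.
  by apply: measurable_funM; apply: measurable_fine_markov_kernel hK _ _;
    exact: measurable_seg0X.
apply: (@ae_eq_subset _ (measurableTypeR R) R _ _ _ _ _ _ vsub).
(* [unit_I] is convertible to [seg0 1], so the strips are rectangles. *)
have ae1 : ae_eq lebesgue_measure unit_I
    (fun t => (\1_(seg0 u1 `*` unit_I) (h1 t, h2 t))%:E)
    (fun t => K t (seg0 u1 `*` unit_I)).
  exact: markov_kernel_seg0X_ae_eq hD hK u1I unit_I1.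
have ae2 : ae_eq lebesgue_measure unit_I
    (fun t => (\1_(unit_I `*` seg0 u2) (h1 t, h2 t))%:E)
    (fun t => K t (unit_I `*` seg0 u2)).
  exact: markov_kernel_seg0X_ae_eq hD hK unit_I1 u2I.
apply: filterS2 ae1 ae2 => t e1 e2 tI.
by rewrite /F13 /F23 -e1 // -e2 //= (indic_setX_split _ _ (h1I t tI) (h2I t tI)).
Qed.
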